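(* Consider control protocol (C4) with $r_1=\cdots=r_n\in[\frac1{n-1},1)$, and let $c_\eta=\frac{2\eta(n-1)}{n}$. If $\eta\le\frac{nr_1}{2(n-1)}$, then for any $\varepsilon>0$ the set $E'_\varepsilon=\{(x_1,\dots,x_n)\in[0,1]^n: c_\eta-\varepsilon\le\max_{i,j}|x_i-x_j|\le c_\eta\}$ is finite-time robustly reachable from $[0,1]^n$.
   Context: Fix $n\ge3$, $\mathcal V=\{1,\dots,n\}$, confidence thresholds $r_i\in(0,1]$, $\eta>0$. States $x(t)\in[0,1]^n$. Neighbor set $\mathcal N_i(t)=\{j:|x_j(t)-x_i(t)|\le r_i\}$ (contains $i$), $\Pi_{[0,1]}(y)=\min\{1,\max\{0,y\}\}$. Control protocol (C4): $x_i(t+1)=\Pi_{[0,1]}\big(|\mathcal N_i(t)|^{-1}[x_i(t)+\sum_{j\in\mathcal N_i(t)\setminus\{i\}}(x_j(t)+u_{ji}(t)+b_{ji}(t))]\big)$, where for $j\in\mathcal N_i(t)\setminus\{i\}$: $\delta_i(t)\in(0,\eta)$ is a chosen parameter, $u_{ji}(t)\in[-\eta+\delta_i(t),\eta-\delta_i(t)]$ a chosen control input, $b_{ji}(t)\in[-\delta_i(t),\delta_i(t)]$ an arbitrary uncertainty; the choices may depend on $x(0),\dots,x(t)$. A set $S\subseteq[0,1]^n$ is finite-time robustly reachable from $[0,1]^n$ under the protocol if there exist constants $T>0$ and $\varepsilon'\in(0,\eta)$ such that for every $x(0)\in[0,1]^n$, either $x(0)\in S$, or one can choose $\delta_i(t)\in[\varepsilon',\eta)$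 and $u_{ji}(t)\in[-\eta+\delta_i(t),\eta-\delta_i(t)]$ ($0\le t<T$, $i\in\mathcal V$, $j\in\mathcal N_i(t)\setminus\{i\}$) guaranteeing that for arbitrary $b_{ji}(t)\in[-\delta_i(t),\delta_i(t)]$ there is $t\in[1,T]$ with $x(t)\in S$. *)

From Stdlib Require Import Reals Lra Lia List.
Import ListNotations.
Open Scope R_scope.

(* Agents are indexed 0..n-1 (paper: 1..n). A state is x : nat -> R,
   only the coordinates i < n are meaningful. *)
Definition state := nat -> R.

Definition proj01 (y : R) : R := Rmin 1 (Rmax 0 y).

Definition nbrs (n : nat) (r : nat -> R) (x : state) (i : nat) : list nat :=
  filter (fun j => if Rle_dec (Rabs (x j - x i)) (r i) then true else false)
         (seq 0 n).

Definition sumR (l : list nat) (f : nat -> R) : R :=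
  fold_right (fun j acc => f j + acc) 0 l.

Definition step (n : nat) (r : nat -> R) (x : state)
    (u b : nat -> nat -> R) : state :=
  fun i =>
    let N := nbrs n r x i in
    proj01 ((x i + sumR (filter (fun j => negb (Nat.eqb j i)) N)
                        (fun j => x j + u j i + b j i))
            / INR (length N)).

(* Feedback control: delta t h i = delta_i(t), u t h j i = u_{ji}(t), where
   h is the history up to time t (h s = x(s) for s <= t, h s = x(t) for s > t). *)
Fixpoint hist (n : nat) (r : nat -> R) (x0 : state)
    (u : nat -> (nat -> state) -> nat -> nat -> R)
    (b : nat -> nat -> nat -> R) (t : nat) : nat -> state :=
  match t with
  | O => fun _ => x0
  | S t' =>
      let h := hist n r x0 u b t' in
      fun s => if Nat.leb s t' then h s else step n r (h t') (u t' h) (b t')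
  end.

Definition traj n r x0 u b (t : nat) : state := hist n r x0 u b t t.

Definition in_cube (n : nat) (x : state) : Prop :=
  forall i, (i < n)%nat -> 0 <= x i <= 1.

Definition robustly_reachable (n : nat) (r : nat -> R) (eta : R)
    (S : state -> Prop) : Prop :=
  exists T : nat, (0 < T)%nat /\
  exists eps' : R, 0 < eps' < eta /\
  forall x0 : state, in_cube n x0 ->
    S x0 \/
    exists (delta : nat -> (nat -> state) -> nat -> R)
           (u : nat -> (nat -> state) -> nat -> nat -> R),
      (forall t h i j, (t < T)%nat -> (i < n)%nat -> (j < n)%nat ->
         eps' <= delta t h i < eta /\
         - eta + delta t h i <= u t h j i <= eta - delta t h i) /\
      forall b : nat -> nat -> nat -> R,
        (forall t i j, (t < T)%nat -> (i < n)%nat -> (j < n)%nat ->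
           - delta t (hist n r x0 u b t) i <= b t j i
             <= delta t (hist n r x0 u b t) i) ->
        exists t : nat, (1 <= t <= T)%nat /\ S (traj n r x0 u b t).

Definition spread (n : nat) (x : state) : R :=
  fold_right Rmax 0
    (flat_map (fun i => map (fun j => Rabs (x i - x j)) (seq 0 n)) (seq 0 n)).

Definition c_eta (n : nat) (eta : R) : R := 2 * eta * (INR n - 1) / INR n.

Definition E' (n : nat) (eta eps : R) (x : state) : Prop :=
  in_cube n x /\ c_eta n eta - eps <= spread n x <= c_eta n eta.

From Stdlib Require Import Reals Lra Lia List Classical Bool.
Import ListNotations.
Open Scope R_scope.

(* If agent [i] applies the same input [w i] to all its neighbours, one step of (C4)
   moves it to [proj01 (m_i + k_i w_i + beta_i)], where [m_i] is its neighbourhood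
   average, [k_i = (|N_i| - 1) / |N_i|] and [|beta_i| <= k_i d] collects the uncertainties;
   isolated agents do not move.  With inputs of size [v0] and uncertainties of size
   [d << v0 << r1] the agents are steered in four phases.
   1. Towards 0.  The highest agents that are isolated stay where they are (they are
      frozen); the other free agents sink by [v0 / 4] per step.  As [n] points of [[0,1]]
      cannot be pairwise more than [r1 >= 1 / (n - 1)] apart, after finitely many steps
      a cluster of at least two agents lies more than [r1] below all the others.
   2. Towards 1.  A cluster moves rigidly, so it rises until it touches the next agent,
      which it absorbs in one step; eventually it contains every agent.
   3. Towards 1/2.  Everybody now sees everybody, and the group contracts around [1/2].
   4. Agents [0] and [1] get the inputs [eta - d] and [- (eta - d)], the others none:
      all share the mean and the gain [(n - 1) / n], so the spread becomes
      [2 (n - 1) / n (eta - d) = c_eta - 2 (n - 1) / n d] up to the noise. *)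

Local Notation without i l := (filter (fun j => negb (Nat.eqb j i)) l).

Lemma in_without (i j : nat) (l : list nat) : In j (without i l) <-> In j l /\ j <> i.
Proof.
  rewrite filter_In. destruct (Nat.eqb_spec j i); simpl; intuition discriminate.
Qed.

Lemma without_notin (i : nat) (l : list nat) : ~ In i l -> without i l = l.
Proof.
  induction l as [|a l IH]; simpl; intros H; auto.
  destruct (Nat.eqb_spec a i); [exfalso; apply H; auto|].
  simpl; f_equal; apply IH; intuition.
Qed.

Definition add_member (G : nat -> bool) (F : nat) : nat -> bool := fun j => G j || Nat.eqb j F.

Lemma add_member_true (G : nat -> bool) (F j : nat) :
  add_member G F j = true <-> G j = true \/ j = F.
Proof. unfold add_member. rewrite orb_true_iff, Nat.eqb_eq. tauto. Qed.

Lemma add_member_false (G : nat -> bool) (F j : nat) :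
  add_member G F j = false <-> G j = false /\ j <> F.
Proof. unfold add_member. rewrite orb_false_iff, Nat.eqb_neq. tauto. Qed.

Lemma sumR_nil (f : nat -> R) : sumR [] f = 0.
Proof. reflexivity. Qed.

Lemma sumR_cons (a : nat) (l : list nat) (f : nat -> R) :
  sumR (a :: l) f = f a + sumR l f.
Proof. reflexivity. Qed.

Lemma sumR_without (f : nat -> R) (i : nat) (l : list nat) :
  NoDup l -> In i l ->
  length l = S (length (without i l)) /\ sumR l f = f i + sumR (without i l) f.
Proof.
  induction l as [|a l IH]; intros Hnd Hin; [contradiction|].
  inversion Hnd as [|? ? Ha Hl]; subst. rewrite sumR_cons. cbn [filter length].
  destruct (Nat.eqb_spec a i) as [->|Hai]; cbn [negb].
  - rewrite without_notin by auto. auto.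
  - destruct Hin as [Hin|Hin]; [congruence|].
    destruct (IH Hl Hin) as [E1 E2]. rewrite sumR_cons, E1, E2. cbn [length]. split; [auto|lra].
Qed.

Lemma sumR_add (l : list nat) (f g : nat -> R) :
  sumR l (fun j => f j + g j) = sumR l f + sumR l g.
Proof. induction l; rewrite ?sumR_cons, ?sumR_nil; [lra|]. rewrite IHl; lra. Qed.

Lemma sumR_const (l : list nat) (c : R) : sumR l (fun _ => c) = INR (length l) * c.
Proof.
  induction l; rewrite ?sumR_cons, ?sumR_nil; [simpl; lra|].
  cbn [length]. rewrite IHl, S_INR; lra.
Qed.

Lemma sumR_ext (l : list nat) (f g : nat -> R) :
  (forall j, In j l -> f j = g j) -> sumR l f = sumR l g.
Proof.
  induction l as [|a l IH]; intros H; rewrite ?sumR_cons, ?sumR_nil; [lra|].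
  rewrite (H a (or_introl eq_refl)), IH; [lra|]. intros j Hj; apply H; right; exact Hj.
Qed.

Lemma sumR_le (l : list nat) (f g : nat -> R) :
  (forall j, In j l -> f j <= g j) -> sumR l f <= sumR l g.
Proof.
  induction l as [|a l IH]; intros H; rewrite ?sumR_cons, ?sumR_nil; [lra|].
  assert (H1 := H a (or_introl eq_refl)).
  assert (H2 : sumR l f <= sumR l g) by (apply IH; intros j Hj; apply H; right; exact Hj).
  lra.
Qed.

Lemma sumR_bounds (l : list nat) (f : nat -> R) (a b : R) :
  (forall j, In j l -> a <= f j <= b) ->
  INR (length l) * a <= sumR l f <= INR (length l) * b.
Proof.
  intros H. rewrite <- !sumR_const.
  split; apply sumR_le; intros j Hj; apply H; exact Hj.
Qed.

Lemma exists_argmin (x : state) (l : list nat) :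
  l <> [] -> exists i, In i l /\ forall j, In j l -> x i <= x j.
Proof.
  induction l as [|a [|c l] IH]; intros H; [congruence| |].
  - exists a. split; [left; auto|]. intros j [<-|[]]; lra.
  - destruct IH as [i [Hi Hmin]]; [discriminate|].
    destruct (Rle_dec (x a) (x i)).
    + exists a. split; [left; auto|]. intros j [<-|Hj]; [lra|]. specialize (Hmin j Hj); lra.
    + exists i. split; [right; auto|]. intros j [<-|Hj]; [lra|auto].
Qed.

Lemma exists_argmax (x : state) (l : list nat) :
  l <> [] -> exists i, In i l /\ forall j, In j l -> x j <= x i.
Proof.
  intros H. destruct (exists_argmin (fun j => - x j) l H) as [i [Hi Hm]].
  exists i. split; auto. intros j Hj. specialize (Hm j Hj). lra.
Qed.

(* Removing the lowest point, the next lowest lies more than [r] above it; this makes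
   the bound strict as soon as there are two points. *)
Lemma separated_points_span (x : state) (r : R) (k : nat) : forall (a b : R) (l : list nat),
  length l = S k -> NoDup l ->
  (forall i, In i l -> a <= x i <= b) ->
  (forall i j, In i l -> In j l -> i <> j -> r < Rabs (x i - x j)) ->
  k = 0%nat \/ INR k * r < b - a.
Proof.
  induction k as [|k IH]; intros a b l Hlen Hnd Hab Hfar; [left; reflexivity|right].
  assert (Hne : l <> []) by (intros ->; discriminate).
  destruct (exists_argmin x l Hne) as [m [Hm Hmin]].
  set (l' := without m l).
  assert (Hl' : length l' = S k) by (unfold l'; destruct (sumR_without x m l Hnd Hm); lia).
  assert (Hin' : forall j, In j l' -> In j l /\ j <> m) by (intros j; apply in_without).
  assert (Hne' : l' <> []) by (intros E; rewrite E in Hl'; discriminate).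
  destruct (exists_argmin x l' Hne') as [m' [Hm' Hmin']].
  destruct (Hin' m' Hm') as [Hm'l Hm'm].
  assert (Hgap : x m + r < x m').
  { specialize (Hfar m' m Hm'l Hm Hm'm). specialize (Hmin m' Hm'l).
    unfold Rabs in Hfar; destruct Rcase_abs; lra. }
  assert (Hlow := proj1 (Hab m Hm)). assert (Hup := proj2 (Hab m' Hm'l)).
  destruct (IH (x m') b l' Hl') as [->|Hk].
  - apply NoDup_filter, Hnd.
  - intros i Hi. destruct (Hin' i Hi). split; [apply Hmin'; auto|apply Hab; auto].
  - intros i j Hi Hj. apply Hfar; apply Hin'; auto.
  - simpl. lra.
  - rewrite S_INR. lra.
Qed.

Lemma Rdiv_le_of (a b c : R) : 0 < c -> a <= b * c -> a / c <= b.
Proof.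
  intros Hc H. apply Rmult_le_reg_r with c; [auto|].
  unfold Rdiv. rewrite Rmult_assoc, Rinv_l by lra. lra.
Qed.

Lemma Rle_div_of (a b c : R) : 0 < c -> a * c <= b -> a <= b / c.
Proof.
  intros Hc H. apply Rmult_le_reg_r with c; [auto|].
  unfold Rdiv. rewrite Rmult_assoc, Rinv_l by lra. lra.
Qed.

Lemma proj01_in (y : R) : 0 <= proj01 y <= 1.
Proof. unfold proj01, Rmin, Rmax. repeat destruct Rle_dec; lra. Qed.

Lemma proj01_id (y : R) : 0 <= y <= 1 -> proj01 y = y.
Proof. unfold proj01, Rmin, Rmax. intros. repeat destruct Rle_dec; lra. Qed.

Lemma proj01_le_hom (a b : R) : a <= b -> proj01 a <= proj01 b.
Proof. unfold proj01, Rmin, Rmax. intros. repeat destruct Rle_dec; lra. Qed.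

Lemma proj01_le (y : R) : 0 <= y -> proj01 y <= y.
Proof. unfold proj01, Rmin, Rmax. intros. repeat destruct Rle_dec; lra. Qed.

Lemma proj01_le_max (y : R) : proj01 y <= Rmax 0 y.
Proof. unfold proj01, Rmin, Rmax. repeat destruct Rle_dec; lra. Qed.

Lemma proj01_ge (y : R) : y <= 1 -> y <= proj01 y.
Proof. unfold proj01, Rmin, Rmax. intros. repeat destruct Rle_dec; lra. Qed.

Lemma proj01_lipschitz (a b : R) : Rabs (proj01 a - proj01 b) <= Rabs (a - b).
Proof.
  unfold proj01, Rmin, Rmax.
  repeat destruct Rle_dec; unfold Rabs; repeat destruct Rcase_abs; lra.
Qed.

Definition clamp (v0 y : R) : R := Rmax (- v0) (Rmin v0 y).

Lemma clamp_abs (v0 y : R) : 0 <= v0 -> Rabs (clamp v0 y) <= v0.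
Proof. intros. unfold clamp, Rmax, Rmin. apply Rabs_le. repeat destruct Rle_dec; lra. Qed.

Lemma Rabs_le_inv (a b : R) : Rabs a <= b -> -b <= a <= b.
Proof. unfold Rabs; destruct (Rcase_abs a); intros; lra. Qed.

Lemma fold_Rmax_ge (l : list R) (a : R) : In a l -> a <= fold_right Rmax 0 l.
Proof.
  induction l as [|b l IH]; simpl; intros H; [contradiction|].
  destruct H as [<-|H]; [apply Rmax_l|]. eapply Rle_trans; [apply IH; auto|apply Rmax_r].
Qed.

Lemma fold_Rmax_le (l : list R) (B : R) :
  0 <= B -> (forall a, In a l -> a <= B) -> fold_right Rmax 0 l <= B.
Proof.
  induction l as [|b l IH]; simpl; intros H0 H; auto.
  apply Rmax_lub; [apply H; auto|apply IH; auto].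
Qed.

Lemma spread_ge (n : nat) (x : state) (i j : nat) :
  (i < n)%nat -> (j < n)%nat -> Rabs (x i - x j) <= spread n x.
Proof.
  intros Hi Hj. apply fold_Rmax_ge, in_flat_map. exists i.
  split; [apply in_seq; lia|]. apply in_map_iff. exists j. split; auto. apply in_seq; lia.
Qed.

Lemma spread_le (n : nat) (x : state) (B : R) : 0 <= B ->
  (forall i j, (i < n)%nat -> (j < n)%nat -> Rabs (x i - x j) <= B) -> spread n x <= B.
Proof.
  intros H0 H. apply fold_Rmax_le; auto. intros a Ha.
  apply in_flat_map in Ha. destruct Ha as [i [Hi Ha]]. apply in_map_iff in Ha.
  destruct Ha as [j [<- Hj]]. apply in_seq in Hi. apply in_seq in Hj. apply H; lia.
Qed.

Section Neighbourhoods.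

Variables (n : nat) (r1 : R).

Local Notation nb x i := (nbrs n (fun _ => r1) x i).

Definition others (x : state) (i : nat) : list nat := without i (nb x i).

Definition nbr_mean (x : state) (i : nat) : R :=
  (x i + sumR (others x i) x) / INR (S (length (others x i))).

Definition nbr_gain (x : state) (i : nat) : R :=
  INR (length (others x i)) / INR (S (length (others x i))).

Lemma in_nbrs (x : state) (i j : nat) :
  In j (nb x i) <-> (j < n)%nat /\ Rabs (x j - x i) <= r1.
Proof.
  unfold nbrs. rewrite filter_In, in_seq.
  destruct Rle_dec; split; intuition (try lia; try discriminate).
Qed.

Lemma in_others (x : state) (i j : nat) :
  In j (others x i) <-> (j < n)%nat /\ j <> i /\ Rabs (x j - x i) <= r1.
Proof. unfold others. rewrite in_without, in_nbrs. tauto. Qed.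

Lemma NoDup_nbrs (x : state) (i : nat) : NoDup (nb x i).
Proof. apply NoDup_filter, seq_NoDup. Qed.

Hypothesis r1_ge0 : 0 <= r1.

Lemma nbrs_split (x : state) (i : nat) : (i < n)%nat ->
  length (nb x i) = S (length (others x i)) /\ sumR (nb x i) x = x i + sumR (others x i) x.
Proof.
  intros Hi. apply sumR_without; [apply NoDup_nbrs|].
  apply in_nbrs. rewrite Rminus_diag, Rabs_R0. auto.
Qed.

Lemma nbr_mean_gain_nbrs (x : state) (i : nat) : (i < n)%nat ->
  nbr_mean x i = sumR (nb x i) x / INR (length (nb x i)) /\
  nbr_gain x i = (INR (length (nb x i)) - 1) / INR (length (nb x i)).
Proof.
  intros Hi. destruct (nbrs_split x i Hi) as [E1 E2].
  unfold nbr_mean, nbr_gain. rewrite E1, E2, S_INR. split; [auto|f_equal; ring].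
Qed.

Lemma nbr_mean_gain_eq (x : state) (i i' : nat) : (i < n)%nat -> (i' < n)%nat ->
  nb x i = nb x i' -> nbr_mean x i = nbr_mean x i' /\ nbr_gain x i = nbr_gain x i'.
Proof.
  intros Hi Hi' E.
  destruct (nbr_mean_gain_nbrs x i Hi), (nbr_mean_gain_nbrs x i' Hi') as [-> ->].
  rewrite <- E. auto.
Qed.

Lemma nbr_gain_full (x : state) (i : nat) : (i < n)%nat ->
  (forall j, (j < n)%nat -> Rabs (x j - x i) <= r1) -> nbr_gain x i = (INR n - 1) / INR n.
Proof.
  intros Hi H. rewrite (proj2 (nbr_mean_gain_nbrs x i Hi)).
  assert (E : nb x i = seq 0 n).
  { unfold nbrs. rewrite <- (filter_true (seq 0 n)) at 2. apply filter_ext_in.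
    intros a Ha. apply in_seq in Ha.
    destruct Rle_dec as [|Hno]; [auto|]. exfalso. apply Hno, H. lia. }
  rewrite E, length_seq. auto.
Qed.

Lemma others_nil (x : state) (i : nat) :
  (forall j, (j < n)%nat -> j <> i -> r1 < Rabs (x j - x i)) -> others x i = [].
Proof.
  intros H. destruct (others x i) as [|j l] eqn:E; auto. exfalso.
  assert (Hj : In j (others x i)) by (rewrite E; left; auto).
  apply in_others in Hj. destruct Hj as [H1 [H2 H3]]. specialize (H j H1 H2). lra.
Qed.

Lemma others_length_pos (x : state) (i j : nat) :
  (j < n)%nat -> j <> i -> Rabs (x j - x i) <= r1 -> (1 <= length (others x i))%nat.
Proof.
  intros H1 H2 H3. assert (Hj : In j (others x i)) by (apply in_others; auto).
  destruct (others x i); [contradiction|simpl; lia].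
Qed.

Lemma nbr_gain_bounds (x : state) (i : nat) : 0 <= nbr_gain x i < 1.
Proof.
  unfold nbr_gain. rewrite S_INR. set (L := INR (length _)).
  assert (0 <= L) by apply pos_INR.
  split; [apply Rle_div_of; lra|].
  apply Rmult_lt_reg_r with (L + 1); [lra|].
  unfold Rdiv. rewrite Rmult_assoc, Rinv_l by lra. lra.
Qed.

Lemma nbr_gain_ge_half (x : state) (i : nat) :
  (1 <= length (others x i))%nat -> / 2 <= nbr_gain x i.
Proof.
  intros H. unfold nbr_gain. set (L := length _) in *. rewrite S_INR.
  apply le_INR in H. simpl in H.
  apply Rle_div_of; lra.
Qed.

Lemma nbr_gain_nil (x : state) (i : nat) : others x i = [] -> nbr_gain x i = 0.
Proof. intros H. unfold nbr_gain. rewrite H. simpl. lra. Qed.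

Lemma nbr_mean_nil (x : state) (i : nat) : others x i = [] -> nbr_mean x i = x i.
Proof. intros H. unfold nbr_mean. rewrite H, sumR_nil. simpl. field. Qed.

Lemma nbr_mean_bounds (x : state) (i : nat) (a b : R) :
  a <= x i <= b -> (forall j, In j (others x i) -> a <= x j <= b) ->
  a <= nbr_mean x i <= b.
Proof.
  intros Hi Hj. unfold nbr_mean. set (L := others x i) in *.
  assert (Hs := sumR_bounds L x a b Hj).
  rewrite S_INR. assert (0 <= INR (length L)) by apply pos_INR.
  split; [apply Rle_div_of|apply Rdiv_le_of]; lra.
Qed.

Lemma nbr_mean_le_midpoint (x : state) (i F : nat) (M : R) : (i < n)%nat ->
  In F (nb x i) -> (forall j, In j (nb x i) -> j <> F -> x j <= M) ->
  M <= x F -> (2 <= length (nb x i))%nat ->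
  nbr_mean x i <= (x F + M) / 2.
Proof.
  intros Hi HF HM HMF Hlen. rewrite (proj1 (nbr_mean_gain_nbrs x i Hi)).
  destruct (sumR_without x F (nb x i) (NoDup_nbrs x i) HF) as [E1 E2].
  set (L' := without F (nb x i)) in *.
  assert (Hs : sumR L' x <= INR (length L') * M).
  { rewrite <- sumR_const. apply sumR_le. intros j Hj. apply in_without in Hj.
    apply HM; tauto. }
  assert (HL : 1 <= INR (length L')) by (apply (le_INR 1); lia).
  rewrite E2, E1, S_INR.
  assert (0 <= (INR (length L') - 1) * (x F - M)) by (apply Rmult_le_pos; lra).
  apply Rdiv_le_of; lra.
Qed.

Lemma nbr_gain_scale_abs (x : state) (i : nat) (y : R) : Rabs (nbr_gain x i * y) <= Rabs y.
Proof.
  assert (Hk := nbr_gain_bounds x i).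
  rewrite Rabs_mult, (Rabs_right (nbr_gain x i)) by lra.
  assert (0 <= Rabs y) by apply Rabs_pos. nra.
Qed.

(* One step of (C4) in which agent [i] applies the same input [w i] to every neighbour:
   [beta] collects the averaged uncertainties. *)
Definition transition (d : R) (x x' : state) (w : nat -> R) : Prop :=
  forall i, (i < n)%nat -> exists beta, Rabs beta <= nbr_gain x i * d /\
    x' i = proj01 (nbr_mean x i + nbr_gain x i * w i + beta).

Lemma step_transition (d : R) (x : state) (u b : nat -> nat -> R) (w : nat -> R) :
  (forall i j, (i < n)%nat -> (j < n)%nat -> u j i = w i /\ Rabs (b j i) <= d) ->
  transition d x (step n (fun _ => r1) x u b) w.
Proof.
  intros H i Hi. destruct (nbrs_split x i Hi) as [Hlen _].
  set (L := others x i).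
  assert (Hc : 0 < INR (S (length L))) by (apply lt_0_INR; lia).
  assert (HL : forall j, In j L -> u j i = w i /\ Rabs (b j i) <= d).
  { intros j Hj. apply in_others in Hj. apply H; tauto. }
  exists (sumR L (fun j => b j i) / INR (S (length L))). split.
  - assert (Hb : forall j, In j L -> -d <= b j i <= d) by (intros j Hj; apply Rabs_le_inv, HL, Hj).
    destruct (sumR_bounds L (fun j => b j i) (-d) d Hb).
    replace (nbr_gain x i * d) with (INR (length L) * d / INR (S (length L)))
      by (unfold nbr_gain; fold L; field; lra).
    apply Rabs_le. unfold Rdiv. rewrite Ropp_mult_distr_l.
    split; apply Rmult_le_compat_r; try (left; apply Rinv_0_lt_compat); lra.
  - unfold step. cbv zeta. fold (others x i). fold L. rewrite Hlen. f_equal.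
    unfold nbr_mean, nbr_gain. fold L.
    rewrite (sumR_ext L (fun j => x j + u j i + b j i) (fun j => x j + (w i + b j i)))
      by (intros j Hj; rewrite (proj1 (HL j Hj)); ring).
    rewrite !sumR_add, sumR_const. field. lra.
Qed.

Lemma transition_isolated (d : R) (x x' : state) (w : nat -> R) (i : nat) :
  transition d x x' w -> in_cube n x -> (i < n)%nat ->
  (forall j, (j < n)%nat -> j <> i -> r1 < Rabs (x j - x i)) -> x' i = x i.
Proof.
  intros Ht Hc Hi Hiso. destruct (Ht i Hi) as [beta [Hb ->]].
  assert (H0 := others_nil x i Hiso).
  rewrite (nbr_gain_nil x i H0) in Hb |- *. rewrite (nbr_mean_nil x i H0).
  assert (Hb0 : beta = 0) by (rewrite Rmult_0_l in Hb; apply Rabs_le_inv in Hb; lra).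
  rewrite Hb0, Rmult_0_l, !Rplus_0_r. apply proj01_id, Hc, Hi.
Qed.

Lemma transition_bounds (d v0 : R) (x x' : state) (w : nat -> R) (i : nat) (lo hi : R) :
  0 <= d -> transition d x x' w -> (i < n)%nat -> Rabs (w i) <= v0 ->
  lo <= nbr_mean x i <= hi -> proj01 (lo - v0 - d) <= x' i <= proj01 (hi + v0 + d).
Proof.
  intros Hd Ht Hi Hw Hm. destruct (Ht i Hi) as [beta [Hb ->]].
  assert (Hkw := Rle_trans _ _ _ (nbr_gain_scale_abs x i (w i)) Hw).
  assert (Hbd : Rabs beta <= d) by (assert (Hk := nbr_gain_bounds x i); nra).
  apply Rabs_le_inv in Hkw. apply Rabs_le_inv in Hbd.
  split; apply proj01_le_hom; lra.
Qed.

End Neighbourhoods.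

Section Steering.

Variables (n : nat) (r1 d v0 : R).

Hypothesis n_ge3 : (3 <= n)%nat.
Hypothesis r1_ge : 1 / (INR n - 1) <= r1.
Hypothesis r1_lt1 : r1 < 1.
Hypothesis d_pos : 0 < d.
Hypothesis v0_pos : 0 < v0.
Hypothesis d_le : d <= v0 / 8.
Hypothesis v0_le : v0 <= r1 / 8.

Local Notation nbr_mean := (nbr_mean n r1).
Local Notation nbr_gain := (nbr_gain n r1).
Local Notation others := (others n r1).
Local Notation transition := (transition n r1 d).

Lemma INR_n_ge3 : 3 <= INR n.
Proof. replace 3 with (INR 3) by (simpl; lra). apply le_INR, n_ge3. Qed.

Lemma r1_pos : 0 < r1.
Proof.
  assert (HN := INR_n_ge3). eapply Rlt_le_trans; [|apply r1_ge].
  apply Rdiv_lt_0_compat; lra.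
Qed.

Lemma r1_nonneg : 0 <= r1.
Proof. apply Rlt_le, r1_pos. Qed.

(* The pigeonhole principle: [n] points of [[0,1]] cannot be pairwise more than
   [1 / (n - 1)] apart. *)
Lemma not_all_apart (x : state) : in_cube n x ->
  ~ (forall i j, (i < n)%nat -> (j < n)%nat -> i <> j -> r1 < Rabs (x i - x j)).
Proof.
  intros Hc Hfar. assert (HN := INR_n_ge3).
  destruct (separated_points_span x r1 (n - 1) 0 1 (seq 0 n)) as [Hk|Hk].
  - rewrite length_seq. lia.
  - apply seq_NoDup.
  - intros i Hi. apply Hc. apply in_seq in Hi. lia.
  - intros i j Hi Hj. apply in_seq in Hi. apply in_seq in Hj. apply Hfar; lia.
  - lia.
  - rewrite minus_INR in Hk by lia. simpl in Hk.
    assert (1 <= (INR n - 1) * r1).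
    { apply Rmult_le_compat_l with (r := INR n - 1) in r1_ge; [|lra].
      replace ((INR n - 1) * (1 / (INR n - 1))) with 1 in r1_ge by (field; lra). lra. }
    lra.
Qed.

Record isolated_cluster (x : state) (G : nat -> bool) (s : R) : Prop := {
  ic_width : s <= r1;
  ic_diam : forall i j, (i < n)%nat -> (j < n)%nat -> G i = true -> G j = true ->
    Rabs (x i - x j) <= s;
  ic_below : forall i k, (i < n)%nat -> (k < n)%nat -> G i = true -> G k = false ->
    x i + r1 < x k;
  ic_apart : forall k l, (k < n)%nat -> (l < n)%nat -> G k = false -> G l = false -> k <> l ->
    r1 < Rabs (x k - x l);
  ic_pair : exists i j, (i < n)%nat /\ (j < n)%nat /\ i <> j /\ G i = true /\ G j = true }.

Arguments ic_width {x G s}.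
Arguments ic_diam {x G s}.
Arguments ic_below {x G s}.
Arguments ic_apart {x G s}.
Arguments ic_pair {x G s}.

(* [F] is the next agent above a tight cluster [G], close enough to be absorbed. *)
Record touching_cluster (x : state) (G : nat -> bool) (F : nat) : Prop := {
  tc_diam : forall i j, (i < n)%nat -> (j < n)%nat -> G i = true -> G j = true ->
    Rabs (x i - x j) <= 2 * d;
  tc_F_lt : (F < n)%nat;
  tc_F_out : G F = false;
  tc_F_above : forall i, (i < n)%nat -> G i = true -> x i + r1 - (v0 + d) <= x F;
  tc_F_touch : exists i, (i < n)%nat /\ G i = true /\ x F <= x i + r1;
  tc_above : forall k, (k < n)%nat -> G k = false -> k <> F -> x F + r1 < x k;
  tc_apart : forall k l, (k < n)%nat -> (l < n)%nat -> G k = false -> G l = false -> k <> l ->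
    r1 < Rabs (x k - x l);
  tc_pair : exists i j, (i < n)%nat /\ (j < n)%nat /\ i <> j /\ G i = true /\ G j = true }.

Arguments tc_diam {x G F}.
Arguments tc_F_lt {x G F}.
Arguments tc_F_out {x G F}.
Arguments tc_F_above {x G F}.
Arguments tc_F_touch {x G F}.
Arguments tc_above {x G F}.
Arguments tc_apart {x G F}.
Arguments tc_pair {x G F}.

Lemma isolated_cluster_ext (x : state) (G G' : nat -> bool) (s : R) :
  (forall j, (j < n)%nat -> G j = G' j) -> isolated_cluster x G s -> isolated_cluster x G' s.
Proof.
  intros E [C0 C1 C2 C3 [i [j [Hi [Hj [Hij [Gi Gj]]]]]]].
  split; auto; [intros a b Ha Hb Ga Gb; rewrite <- E in Ga, Gb by auto; auto ..|].
  exists i, j. rewrite <- !E by auto. auto.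
Qed.

Lemma isolated_cluster_nbr (x : state) (G : nat -> bool) (s : R) (i j : nat) :
  isolated_cluster x G s -> (i < n)%nat -> G i = true -> (j < n)%nat ->
  (Rabs (x j - x i) <= r1 <-> G j = true).
Proof.
  intros HC Hi Gi Hj. split.
  - intros H. destruct (G j) eqn:Gj; auto.
    assert (A := ic_below HC i j Hi Hj Gi Gj). apply Rabs_le_inv in H. lra.
  - intros Gj. assert (A := ic_diam HC i j Hi Hj Gi Gj). assert (B := ic_width HC).
    rewrite Rabs_minus_sym in A. lra.
Qed.

Lemma isolated_cluster_outsider (x : state) (G : nat -> bool) (s : R) (k : nat) :
  isolated_cluster x G s -> (k < n)%nat -> G k = false ->
  forall j, (j < n)%nat -> j <> k -> r1 < Rabs (x j - x k).
Proof.
  intros HC Hk Gk j Hj Hjk. destruct (G j) eqn:Gj.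
  - assert (A := ic_below HC j k Hj Hk Gj Gk). unfold Rabs; destruct Rcase_abs; lra.
  - apply (ic_apart HC); auto.
Qed.

Lemma isolated_cluster_common (x : state) (G : nat -> bool) (s : R) (i i' : nat) :
  isolated_cluster x G s -> (i < n)%nat -> (i' < n)%nat -> G i = true -> G i' = true ->
  nbr_mean x i = nbr_mean x i' /\ nbr_gain x i = nbr_gain x i'.
Proof.
  intros HC Hi Hi' Gi Gi'. apply (nbr_mean_gain_eq n r1 r1_nonneg); auto.
  unfold nbrs. apply filter_ext_in. intros j Hj. apply in_seq in Hj.
  assert (E1 := isolated_cluster_nbr x G s i j HC Hi Gi ltac:(lia)).
  assert (E2 := isolated_cluster_nbr x G s i' j HC Hi' Gi' ltac:(lia)).
  do 2 destruct Rle_dec; tauto.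
Qed.

Lemma isolated_cluster_gain (x : state) (G : nat -> bool) (s : R) (i : nat) :
  isolated_cluster x G s -> (i < n)%nat -> G i = true -> / 2 <= nbr_gain x i.
Proof.
  intros HC Hi Gi. destruct (ic_pair HC) as [a [b [Ha [Hb [Hab [Ga Gb]]]]]].
  apply nbr_gain_ge_half.
  destruct (Nat.eq_dec a i) as [->|Hai];
    [apply (others_length_pos _ _ x i b)|apply (others_length_pos _ _ x i a)]; auto;
    apply (isolated_cluster_nbr x G s); auto.
Qed.

Lemma isolated_cluster_mean_bounds (x : state) (G : nat -> bool) (s : R) (i : nat) (lo hi : R) :
  isolated_cluster x G s -> (i < n)%nat -> G i = true ->
  (forall j, (j < n)%nat -> G j = true -> lo <= x j <= hi) -> lo <= nbr_mean x i <= hi.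
Proof.
  intros HC Hi Gi H. apply nbr_mean_bounds; [auto|].
  intros j Hj. apply in_others in Hj. destruct Hj as [Hj [_ Hji]].
  apply H; auto. apply (isolated_cluster_nbr x G s i j HC Hi Gi Hj), Hji.
Qed.

Lemma isolated_cluster_fixed (x x' : state) (w : nat -> R) (G : nat -> bool) (s : R) (k : nat) :
  in_cube n x -> isolated_cluster x G s -> transition x x' w -> (k < n)%nat -> G k = false ->
  x' k = x k.
Proof.
  intros Hc HC Ht Hk Gk. apply (transition_isolated n r1 d x x' w k Ht Hc Hk).
  apply (isolated_cluster_outsider x G s k HC Hk Gk).
Qed.

Lemma isolated_cluster_update (x x' : state) (w : nat -> R) (G : nat -> bool) (s : R) (i0 i : nat) :
  isolated_cluster x G s -> transition x x' w -> (i0 < n)%nat -> G i0 = true ->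
  (i < n)%nat -> G i = true -> exists beta, Rabs beta <= nbr_gain x i0 * d /\
    x' i = proj01 (nbr_mean x i0 + nbr_gain x i0 * w i + beta).
Proof.
  intros HC Ht Hi0 Gi0 Hi Gi. destruct (Ht i Hi) as [beta Hb]. exists beta.
  destruct (isolated_cluster_common x G s i i0 HC Hi Hi0 Gi Gi0) as [<- <-]. exact Hb.
Qed.

Lemma noise_le (x : state) (i : nat) (beta : R) :
  Rabs beta <= nbr_gain x i * d -> - d <= beta <= d.
Proof.
  intros Hb. assert (Hk := nbr_gain_bounds n r1 x i).
  apply Rabs_le_inv. eapply Rle_trans; [apply Hb|]. nra.
Qed.

(* All members share neighbourhood, mean and gain, so they move together. *)
Lemma isolated_cluster_step (x x' : state) (w : nat -> R) (G : nat -> bool) (s wc : R) :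
  in_cube n x -> isolated_cluster x G s -> transition x x' w ->
  (forall i, (i < n)%nat -> G i = true -> w i = wc) -> Rabs wc <= v0 ->
  isolated_cluster x' G (2 * d) \/ exists F, touching_cluster x' G F.
Proof.
  intros Hc HC Ht Hw Hwc.
  destruct (ic_pair HC) as [i0 [j0 [Hi0 [Hj0 [Hij [Gi0 Gj0]]]]]].
  assert (Hkw := Rle_trans _ _ _ (nbr_gain_scale_abs n r1 x i0 wc) Hwc).
  apply Rabs_le_inv in Hkw.
  assert (Hdiam : forall i j, (i < n)%nat -> (j < n)%nat -> G i = true -> G j = true ->
             Rabs (x' i - x' j) <= 2 * d).
  { intros i j Hi Hj Gi Gj.
    destruct (isolated_cluster_update x x' w G s i0 i HC Ht Hi0 Gi0 Hi Gi) as [bi [Hbi ->]].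
    destruct (isolated_cluster_update x x' w G s i0 j HC Ht Hi0 Gi0 Hj Gj) as [bj [Hbj ->]].
    apply noise_le in Hbi. apply noise_le in Hbj. rewrite (Hw i Hi Gi), (Hw j Hj Gj).
    eapply Rle_trans; [apply proj01_lipschitz|]. apply Rabs_le. lra. }
  assert (Hup : forall i, (i < n)%nat -> G i = true -> x' i <= nbr_mean x i0 + v0 + d).
  { intros i Hi Gi.
    destruct (isolated_cluster_update x x' w G s i0 i HC Ht Hi0 Gi0 Hi Gi) as [bi [Hbi ->]].
    apply noise_le in Hbi. rewrite (Hw i Hi Gi).
    eapply Rle_trans; [apply proj01_le_max|]. apply Rmax_lub; [|lra].
    assert (0 <= nbr_mean x i0) by (apply (isolated_cluster_mean_bounds x G s i0 0 1); auto).
    lra. }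
  assert (Hnear : forall i k, (i < n)%nat -> (k < n)%nat -> G i = true -> G k = false ->
             x' i + r1 - (v0 + d) <= x' k).
  { intros i k Hi Hk Gi Gk. rewrite (isolated_cluster_fixed x x' w G s k Hc HC Ht Hk Gk).
    assert (nbr_mean x i0 <= x k - r1).
    { apply (isolated_cluster_mean_bounds x G s i0 0 (x k - r1)); auto.
      intros j Hj Gj. split; [apply Hc; auto|].
      assert (A := ic_below HC j k Hj Hk Gj Gk). lra. }
    specialize (Hup i Hi Gi). lra. }
  assert (Hapart : forall k l, (k < n)%nat -> (l < n)%nat -> G k = false -> G l = false ->
             k <> l -> r1 < Rabs (x' k - x' l)).
  { intros k l Hk Hl Gk Gl Hkl. rewrite (isolated_cluster_fixed x x' w G s k Hc HC Ht Hk Gk),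
      (isolated_cluster_fixed x x' w G s l Hc HC Ht Hl Gl). apply (ic_apart HC); auto. }
  destruct (classic (exists F i, (F < n)%nat /\ G F = false /\ (i < n)%nat /\
              G i = true /\ x' F <= x' i + r1)) as [[F [i [HF [GF [Hi [Gi HFi]]]]]]|Hno].
  - right. exists F. split; eauto; [|exists i0, j0; auto].
    intros k Hk Gk HkF. specialize (Hapart k F Hk HF Gk GF HkF).
    specialize (Hnear i k Hi Hk Gi Gk). unfold Rabs in Hapart. destruct Rcase_abs; lra.
  - left. split; eauto; [lra| |exists i0, j0; auto].
    intros i k Hi Hk Gi Gk. apply Rnot_le_lt. intros H. apply Hno. exists k, i. auto.
Qed.

Lemma touching_cluster_isolated (x : state) (G : nat -> bool) (F k : nat) :
  touching_cluster x G F -> (k < n)%nat -> add_member G F k = false ->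
  forall j, (j < n)%nat -> j <> k -> r1 < Rabs (x j - x k).
Proof.
  intros HK Hk Hkout j Hj Hjk. apply add_member_false in Hkout. destruct Hkout as [Gk HkF].
  assert (Hk_above := tc_above HK k Hk Gk HkF).
  destruct (G j) eqn:Gj.
  - assert (A := tc_F_above HK j Hj Gj). unfold Rabs; destruct Rcase_abs; lra.
  - destruct (Nat.eq_dec j F) as [->|HjF].
    + unfold Rabs; destruct Rcase_abs; lra.
    + apply (tc_apart HK); auto.
Qed.

Lemma touching_cluster_nbr (x : state) (G : nat -> bool) (F a j : nat) :
  touching_cluster x G F -> (a < n)%nat -> add_member G F a = true ->
  (j < n)%nat -> Rabs (x j - x a) <= r1 -> add_member G F j = true.
Proof.
  intros HK Ha Ga Hj Hja. destruct (add_member G F j) eqn:Gj; auto. exfalso.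
  destruct (Nat.eq_dec a j) as [->|Haj]; [congruence|].
  assert (A := touching_cluster_isolated x G F j HK Hj Gj a Ha Haj).
  rewrite Rabs_minus_sym in A. lra.
Qed.

Lemma touching_cluster_range (x : state) (G : nat -> bool) (F i0 : nat) :
  touching_cluster x G F -> (i0 < n)%nat -> G i0 = true ->
  (forall i, (i < n)%nat -> G i = true -> x i0 - 2 * d <= x i <= x F - r1 + (v0 + d)) /\
  x i0 <= x F <= x i0 + 2 * d + r1.
Proof.
  intros HK Hi0 Gi0. split.
  - intros i Hi Gi. assert (A := tc_diam HK i0 i Hi0 Hi Gi0 Gi). apply Rabs_le_inv in A.
    assert (B := tc_F_above HK i Hi Gi). lra.
  - destruct (tc_F_touch HK) as [i1 [Hi1 [Gi1 HFi1]]].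
    assert (A := tc_diam HK i0 i1 Hi0 Hi1 Gi0 Gi1). apply Rabs_le_inv in A.
    assert (B := tc_F_above HK i0 Hi0 Gi0). lra.
Qed.

(* Upper bound: if [F] is a neighbour, it is the only one above the cluster and the
   mean is at most halfway between [x F] and the cluster; otherwise only cluster
   members are averaged. *)
Lemma touching_cluster_mean_bounds (x : state) (G : nat -> bool) (F i0 a : nat) :
  in_cube n x -> touching_cluster x G F -> (i0 < n)%nat -> G i0 = true ->
  (a < n)%nat -> add_member G F a = true ->
  x i0 - 2 * d <= nbr_mean x a <= x i0 + 2 * d + (r1 + (v0 + d)) / 2.
Proof.
  intros Hc HK Hi0 Gi0 Ha Ga.
  set (M := x F - r1 + (v0 + d)).
  assert (HF := tc_F_lt HK). assert (GF := tc_F_out HK).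
  destruct (touching_cluster_range x G F i0 HK Hi0 Gi0) as [Hmem HFrange].
  fold M in Hmem. destruct (tc_F_touch HK) as [i1 [Hi1 [Gi1 HFi1]]].
  assert (Hin : forall j, In j (others x a) -> (j < n)%nat /\ add_member G F j = true).
  { intros j Hj. apply in_others in Hj. destruct Hj as [Hj [_ Hja]].
    split; [auto|]. apply (touching_cluster_nbr x G F a j HK Ha Ga Hj Hja). }
  assert (Hrange : forall j, (j < n)%nat -> add_member G F j = true -> x i0 - 2 * d <= x j <= 1).
  { intros j Hj Gj. split; [|apply Hc, Hj].
    apply add_member_true in Gj. destruct Gj as [Gj| ->]; [apply Hmem; auto|lra]. }
  split.
  { apply (nbr_mean_bounds n r1 x a _ 1); [apply Hrange; auto|].
    intros j Hj. apply Hrange; apply Hin, Hj. }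
  destruct (classic (In F (nbrs n (fun _ => r1) x a))) as [HFa|HFa].
  - eapply Rle_trans; [apply (nbr_mean_le_midpoint n r1 r1_nonneg x a F M); auto|unfold M; lra].
    + intros j Hj HjF. apply in_nbrs in Hj. destruct Hj as [Hj Hja].
      assert (Gj := touching_cluster_nbr x G F a j HK Ha Ga Hj Hja).
      apply add_member_true in Gj. destruct Gj as [Gj|]; [apply Hmem; auto|congruence].
    + unfold M. lra.
    + destruct (nbrs_split n r1 r1_nonneg x a Ha) as [-> _].
      apply le_n_S. destruct (Nat.eq_dec a F) as [->|HaF].
      * apply (others_length_pos n r1 x F i1); auto; [congruence|].
        assert (A := tc_F_above HK i1 Hi1 Gi1). apply Rabs_le. lra.
      * apply (others_length_pos n r1 x a F); auto. apply in_nbrs in HFa. tauto.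
  - assert (HaF : a <> F).
    { intros ->. apply HFa, in_nbrs. rewrite Rminus_diag, Rabs_R0. split; [auto|apply r1_nonneg]. }
    assert (HGa : G a = true) by (apply add_member_true in Ga; tauto).
    apply (nbr_mean_bounds n r1 x a 0).
    + split; [apply Hc, Ha|]. assert (A := Hmem a Ha HGa). unfold M in A. lra.
    + intros j Hj. split; [apply Hc, Hin, Hj|].
      destruct (Hin j Hj) as [Hjn Gj]. apply add_member_true in Gj.
      destruct Gj as [Gj| ->].
      * assert (A := Hmem j Hjn Gj). unfold M in A. lra.
      * exfalso. apply HFa. apply in_others in Hj. apply in_nbrs. tauto.
Qed.

Lemma touching_cluster_step (x x' : state) (w : nat -> R) (G : nat -> bool) (F : nat) :
  in_cube n x -> touching_cluster x G F -> transition x x' w ->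
  (forall i, (i < n)%nat -> Rabs (w i) <= v0) ->
  isolated_cluster x' (add_member G F) (r1 / 2 + 7 * d + 3 * v0) /\
  (forall l, (forall i, (i < n)%nat -> G i = true -> l <= x i) ->
     forall a, (a < n)%nat -> add_member G F a = true -> l - 3 * d - v0 <= x' a).
Proof.
  intros Hc HK Ht Hw.
  destruct (tc_pair HK) as [i0 [j0 [Hi0 [Hj0 [Hij [Gi0 Gj0]]]]]].
  assert (HF := tc_F_lt HK). assert (GF := tc_F_out HK).
  set (c := x i0).
  assert (Hnew : forall a, (a < n)%nat -> add_member G F a = true ->
             c - 3 * d - v0 <= x' a <= c + 3 * d + v0 + (r1 + (v0 + d)) / 2).
  { intros a Ha Ga.
    destruct (transition_bounds n r1 d v0 x x' w a _ _ ltac:(lra) Ht Ha (Hw a Ha)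
                (touching_cluster_mean_bounds x G F i0 a Hc HK Hi0 Gi0 Ha Ga)) as [L1 L2].
    assert (0 <= c <= 1) by (apply Hc, Hi0). fold c in L1, L2.
    assert (P1 := proj01_ge (c - 2 * d - v0 - d) ltac:(lra)).
    assert (P2 := proj01_le (c + 2 * d + (r1 + (v0 + d)) / 2 + v0 + d) ltac:(lra)).
    lra. }
  assert (Hfixed : forall k, (k < n)%nat -> add_member G F k = false -> x' k = x k).
  { intros k Hk Gk. apply (transition_isolated n r1 d x x' w k Ht Hc Hk).
    apply (touching_cluster_isolated x G F k HK Hk Gk). }
  split.
  - split.
    + lra.
    + intros i j Hi Hj Gi Gj. assert (Ni := Hnew i Hi Gi). assert (Nj := Hnew j Hj Gj).
      apply Rabs_le. lra.
    + intros i k Hi Hk Gi Gk. rewrite (Hfixed k Hk Gk).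
      apply add_member_false in Gk. destruct Gk as [Gk HkF].
      assert (A := tc_above HK k Hk Gk HkF). assert (B := tc_F_above HK i0 Hi0 Gi0).
      assert (Ni := Hnew i Hi Gi). fold c in B. lra.
    + intros k l Hk Hl Gk Gl Hkl. rewrite (Hfixed k Hk Gk), (Hfixed l Hl Gl).
      apply add_member_false in Gk. apply add_member_false in Gl.
      apply (tc_apart HK); tauto.
    + exists i0, j0. repeat split; auto; apply add_member_true; auto.
  - intros l Hl a Ha Ga. assert (Na := Hnew a Ha Ga). assert (A := Hl i0 Hi0 Gi0).
    fold c in A. lra.
Qed.

Definition clustered (x : state) : Prop :=
  (exists G s, isolated_cluster x G s) \/ (exists G F, touching_cluster x G F).

Definition steer (target : R) (x : state) (i : nat) : R := clamp v0 (target - nbr_mean x i).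

Lemma steer_abs (target : R) (x : state) (i : nat) : Rabs (steer target x i) <= v0.
Proof. apply clamp_abs. lra. Qed.

Lemma clustered_step (x x' : state) (target : R) :
  in_cube n x -> clustered x -> transition x x' (steer target x) -> clustered x'.
Proof.
  intros Hc [[G [s HC]]|[G [F HK]]] Ht.
  - destruct (ic_pair HC) as [i0 [_ [Hi0 [_ [_ [Gi0 _]]]]]].
    destruct (isolated_cluster_step x x' _ G s (steer target x i0) Hc HC Ht)
      as [H|[F H]].
    + intros i Hi Gi. unfold steer.
      rewrite (proj1 (isolated_cluster_common x G s i i0 HC Hi Hi0 Gi Gi0)). reflexivity.
    + apply steer_abs.
    + left. eauto.
    + right. eauto.
  - left. exists (add_member G F). eexists.
    apply (touching_cluster_step x x' _ G F Hc HK Ht). intros i _. apply steer_abs.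
Qed.

Definition outsiders (G : nat -> bool) : nat := length (filter (fun j => negb (G j)) (seq 0 n)).

Lemma in_outsiders (G : nat -> bool) (j : nat) :
  In j (filter (fun j => negb (G j)) (seq 0 n)) <-> (j < n)%nat /\ G j = false.
Proof.
  rewrite filter_In, in_seq. destruct (G j); simpl; intuition (try lia; try discriminate).
Qed.

Lemma outsiders_le (G : nat -> bool) : (outsiders G <= n)%nat.
Proof. unfold outsiders. rewrite <- (length_seq n 0) at 2. apply filter_length_le. Qed.

Lemma outsiders_add_member (G : nat -> bool) (i : nat) : (i < n)%nat -> G i = false ->
  outsiders G = S (outsiders (add_member G i)).
Proof.
  intros Hi Gi. unfold outsiders.
  replace (filter (fun j => negb (add_member G i j)) (seq 0 n))
    with (without i (filter (fun j => negb (G j)) (seq 0 n))).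
  - apply (sumR_without (fun _ => 0)); [apply NoDup_filter, seq_NoDup|apply in_outsiders; auto].
  - unfold add_member. induction (seq 0 n) as [|a l IH]; simpl; auto.
    destruct (G a); simpl; destruct (Nat.eqb a i); simpl; rewrite IH; reflexivity.
Qed.

Lemma outsiders_pos (G : nat -> bool) :
  outsiders G <> 0%nat -> exists k, (k < n)%nat /\ G k = false.
Proof.
  unfold outsiders. destruct (filter _ (seq 0 n)) as [|k l] eqn:E; [simpl; congruence|].
  intros _. exists k. apply in_outsiders. rewrite E. left. reflexivity.
Qed.

Lemma outsiders_zero (G : nat -> bool) : outsiders G = 0%nat -> forall j, (j < n)%nat -> G j = true.
Proof.
  intros H j Hj. destruct (G j) eqn:Gj; auto. exfalso.
  assert (Hin : In j (filter (fun j => negb (G j)) (seq 0 n))) by (apply in_outsiders; auto).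
  unfold outsiders in H. destruct (filter _ _); [contradiction|discriminate].
Qed.

(** * Phase 1: descent *)

(* Phase 1 state: the frozen agents [Fr] sit more than [r1] above the level [th] and
   pairwise more than [r1] apart, so they never move; all other agents lie below [th]. *)
Record descent_state (x : state) (th : R) (Fr : nat -> bool) : Prop := {
  ds_below : forall j, (j < n)%nat -> Fr j = false -> x j <= th;
  ds_frozen_above : forall k, (k < n)%nat -> Fr k = true -> th + r1 < x k;
  ds_frozen_apart : forall k l, (k < n)%nat -> (l < n)%nat -> Fr k = true -> Fr l = true ->
    k <> l -> r1 < Rabs (x k - x l) }.

Arguments ds_below {x th Fr}.
Arguments ds_frozen_above {x th Fr}.
Arguments ds_frozen_apart {x th Fr}.

Lemma descent_frozen_isolated (x : state) (th : R) (Fr : nat -> bool) (k : nat) :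
  descent_state x th Fr -> (k < n)%nat -> Fr k = true ->
  forall j, (j < n)%nat -> j <> k -> r1 < Rabs (x j - x k).
Proof.
  intros HD Hk Fk j Hj Hjk. destruct (Fr j) eqn:Fj.
  - apply (ds_frozen_apart HD); auto.
  - assert (A := ds_below HD j Hj Fj). assert (B := ds_frozen_above HD k Hk Fk).
    unfold Rabs; destruct Rcase_abs; lra.
Qed.

Lemma descent_cluster (x : state) (th : R) (Fr : nat -> bool) :
  in_cube n x -> descent_state x th Fr -> th <= r1 -> isolated_cluster x (fun j => negb (Fr j)) r1.
Proof.
  intros Hc HD Hth. split.
  - lra.
  - intros i j Hi Hj Gi Gj. apply negb_true_iff in Gi. apply negb_true_iff in Gj.
    assert (A := ds_below HD i Hi Gi). assert (B := ds_below HD j Hj Gj).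
    assert (0 <= x i) by (apply Hc; auto). assert (0 <= x j) by (apply Hc; auto).
    apply Rabs_le. lra.
  - intros i k Hi Hk Gi Gk. apply negb_true_iff in Gi. apply negb_false_iff in Gk.
    assert (A := ds_below HD i Hi Gi). assert (B := ds_frozen_above HD k Hk Gk). lra.
  - intros k l Hk Hl Gk Gl. apply negb_false_iff in Gk. apply negb_false_iff in Gl.
    apply (ds_frozen_apart HD); auto.
  - apply NNPP. intros Hno. apply (not_all_apart x Hc). intros i j Hi Hj Hij.
    destruct (Fr i) eqn:Fi.
    + rewrite Rabs_minus_sym. apply (descent_frozen_isolated x th Fr i HD Hi Fi j Hj). auto.
    + destruct (Fr j) eqn:Fj.
      * apply (descent_frozen_isolated x th Fr j HD Hj Fj i Hi). auto.
      * exfalso. apply Hno. exists i, j. rewrite Fi, Fj. auto.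
Qed.

Lemma descent_top (x : state) (Fr : nat -> bool) : in_cube n x ->
  (forall j k, (j < n)%nat -> (k < n)%nat -> Fr j = false -> Fr k = true -> x j + r1 < x k) ->
  (forall k l, (k < n)%nat -> (l < n)%nat -> Fr k = true -> Fr l = true -> k <> l ->
      r1 < Rabs (x k - x l)) ->
  exists i, (i < n)%nat /\ Fr i = false /\ descent_state x (x i) Fr.
Proof.
  intros Hc Hgap Hapart.
  set (NF := filter (fun j => negb (Fr j)) (seq 0 n)).
  assert (Hne : NF <> []).
  { intros E. apply (not_all_apart x Hc). intros i j Hi Hj Hij.
    apply Hapart; auto; apply not_false_iff_true; intros F;
      [assert (H : In i NF) | assert (H : In j NF)];
      try (apply in_outsiders; auto); rewrite E in H; contradiction. }
  destruct (exists_argmax x NF Hne) as [i [Hi Hmax]].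
  apply in_outsiders in Hi. destruct Hi as [Hi Fi].
  exists i. split; [auto|]. split; [auto|]. constructor.
  - intros j Hj Fj. apply Hmax, in_outsiders. auto.
  - intros k Hk Fk. apply Hgap; auto.
  - exact Hapart.
Qed.

Lemma descent_gap (x : state) (th : R) (Fr : nat -> bool) : descent_state x th Fr ->
  forall j k, (j < n)%nat -> (k < n)%nat -> Fr j = false -> Fr k = true -> x j + r1 < x k.
Proof.
  intros HD j k Hj Hk Fj Fk.
  assert (A := ds_below HD j Hj Fj). assert (B := ds_frozen_above HD k Hk Fk). lra.
Qed.

Lemma descent_freeze_top (x : state) (Fr : nat -> bool) (i : nat) :
  descent_state x (x i) Fr -> (i < n)%nat ->
  (forall j, (j < n)%nat -> j <> i -> r1 < Rabs (x j - x i)) ->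
  (forall j k, (j < n)%nat -> (k < n)%nat -> add_member Fr i j = false ->
     add_member Fr i k = true -> x j + r1 < x k) /\
  (forall k l, (k < n)%nat -> (l < n)%nat -> add_member Fr i k = true ->
     add_member Fr i l = true -> k <> l -> r1 < Rabs (x k - x l)).
Proof.
  intros HD Hi Hiso. split.
  - intros j k Hj Hk Fj Fk. apply add_member_false in Fj. destruct Fj as [Fj Hji].
    assert (A := ds_below HD j Hj Fj). apply add_member_true in Fk. destruct Fk as [Fk| ->].
    + assert (B := ds_frozen_above HD k Hk Fk). lra.
    + assert (B := Hiso j Hj Hji). unfold Rabs in B; destruct Rcase_abs; lra.
  - intros k l Hk Hl Fk Fl Hkl. apply add_member_true in Fk. apply add_member_true in Fl.
    destruct Fk as [Fk| ->], Fl as [Fl| ->].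
    + apply (ds_frozen_apart HD); auto.
    + apply Hiso; auto.
    + rewrite Rabs_minus_sym. apply Hiso; auto.
    + congruence.
Qed.

(* Isolated agents at the top are frozen one by one, until the highest free agent has
   a neighbour or is already below [r1]. *)
Lemma descent_normalize (x : state) : in_cube n x -> forall f th Fr, (outsiders Fr <= f)%nat ->
  descent_state x th Fr ->
  exists th' Fr', descent_state x th' Fr' /\ th' <= th /\
    (th' <= r1 \/ exists i, (i < n)%nat /\ Fr' i = false /\ x i = th' /\
        exists j, (j < n)%nat /\ j <> i /\ Rabs (x j - x i) <= r1).
Proof.
  intros Hc f. induction f as [|f IH]; intros th Fr Hcnt HD;
    destruct (descent_top x Fr Hc (descent_gap x th Fr HD) (ds_frozen_apart HD))
      as [i [Hi [Fi HDi]]];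
    rewrite (outsiders_add_member Fr i Hi Fi) in Hcnt; [lia|].
  assert (Hth : x i <= th) by (apply (ds_below HD); auto).
  destruct (classic (x i <= r1 \/ exists j, (j < n)%nat /\ j <> i /\ Rabs (x j - x i) <= r1))
    as [Hstop|Hgo].
  { exists (x i), Fr. split; [auto|]. split; [lra|].
    destruct Hstop as [|Hnb]; [left; auto|right; exists i; auto]. }
  assert (Hiso : forall j, (j < n)%nat -> j <> i -> r1 < Rabs (x j - x i)).
  { intros j Hj Hji. apply Rnot_le_lt. intros H. apply Hgo. right. exists j. auto. }
  destruct (descent_freeze_top x Fr i HDi Hi Hiso) as [Hgap Hapart].
  destruct (descent_top x (add_member Fr i) Hc Hgap Hapart) as [i2 [Hi2 [Fi2 HD2]]].
  destruct (IH (x i2) (add_member Fr i)) as [th' [Fr' [H1 [H2 H3]]]]; [lia|exact HD2|].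
  exists th', Fr'. split; [auto|]. split; [|auto].
  apply add_member_false in Fi2. assert (A := ds_below HDi i2 Hi2 (proj1 Fi2)). lra.
Qed.

Lemma steer_down_le (x x' : state) (j : nat) (th : R) :
  transition x x' (steer 0 x) -> (j < n)%nat -> / 2 <= nbr_gain x j ->
  0 <= nbr_mean x j <= th -> r1 < th -> x' j <= th - v0 / 4.
Proof.
  intros Ht Hj Hk Hm Hth. destruct (Ht j Hj) as [beta [Hb ->]].
  apply noise_le in Hb. assert (Hk1 := nbr_gain_bounds n r1 x j).
  eapply Rle_trans; [apply proj01_le_max|]. apply Rmax_lub; [lra|].
  unfold steer, clamp, Rmax, Rmin. repeat destruct Rle_dec; nra.
Qed.

(* Free agents with a neighbour are pushed down by [v0 / 4]; isolated free agents other
   than the top one already lie [r1] below it. *)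
Lemma descent_step (x x' : state) (th : R) (Fr : nat -> bool) (i0 : nat) :
  in_cube n x -> descent_state x th Fr -> r1 < th ->
  (i0 < n)%nat -> Fr i0 = false -> x i0 = th ->
  (exists j, (j < n)%nat /\ j <> i0 /\ Rabs (x j - x i0) <= r1) ->
  transition x x' (steer 0 x) -> descent_state x' (th - v0 / 4) Fr.
Proof.
  intros Hc HD Hth Hi0 Fi0 Ei0 [j0 [Hj0 [Hj0i Hj0d]]] Ht.
  assert (Hfixed : forall k, (k < n)%nat -> Fr k = true -> x' k = x k).
  { intros k Hk Fk. apply (transition_isolated n r1 d x x' (steer 0 x) k Ht Hc Hk).
    apply (descent_frozen_isolated x th Fr k HD Hk Fk). }
  constructor.
  - intros j Hj Fj.
    destruct (classic (exists l, (l < n)%nat /\ l <> j /\ Rabs (x l - x j) <= r1))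
      as [[l [Hl [Hlj Hld]]]|Hiso].
    + assert (Hm : 0 <= nbr_mean x j <= th).
      { apply nbr_mean_bounds; [split; [apply Hc|apply (ds_below HD)]; auto|].
        intros m Hm. apply in_others in Hm. destruct Hm as [Hm [Hmj Hmd]].
        split; [apply Hc, Hm|]. destruct (Fr m) eqn:Fm; [|apply (ds_below HD); auto].
        exfalso. assert (B := descent_frozen_isolated x th Fr m HD Hm Fm j Hj (not_eq_sym Hmj)).
        rewrite Rabs_minus_sym in B. lra. }
      apply (steer_down_le x x' j th Ht Hj); auto.
      apply nbr_gain_ge_half, (others_length_pos n r1 x j l); auto.
    + assert (Hiso' : forall l, (l < n)%nat -> l <> j -> r1 < Rabs (x l - x j)).
      { intros l Hl Hlj. apply Rnot_le_lt. intros H. apply Hiso. exists l. auto. }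
      rewrite (transition_isolated n r1 d x x' _ j Ht Hc Hj Hiso').
      assert (Hji : j <> i0) by (intros ->; apply Hiso; exists j0; auto).
      assert (B := Hiso' i0 Hi0 (not_eq_sym Hji)). assert (A := ds_below HD j Hj Fj).
      unfold Rabs in B; destruct Rcase_abs in B; lra.
  - intros k Hk Fk. rewrite (Hfixed k Hk Fk). assert (B := ds_frozen_above HD k Hk Fk). lra.
  - intros k l Hk Hl Fk Fl Hkl. rewrite (Hfixed k Hk Fk), (Hfixed l Hl Fl).
    apply (ds_frozen_apart HD); auto.
Qed.

Lemma descent_progress (x x' : state) (th : R) (Fr : nat -> bool) :
  in_cube n x -> in_cube n x' -> descent_state x th Fr -> transition x x' (steer 0 x) ->
  clustered x' \/ exists th' Fr', descent_state x' th' Fr' /\ r1 < th' /\ th' <= th - v0 / 4.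
Proof.
  intros Hc Hc' HD Ht.
  destruct (descent_normalize x Hc n th Fr (outsiders_le Fr) HD)
    as [th' [Fr' [HD' [Hle Hcase]]]].
  destruct (Rle_dec th' r1) as [Hlow|Hhigh].
  { left. apply (clustered_step x x' 0 Hc); [|exact Ht].
    left. exists (fun j => negb (Fr' j)), r1. apply (descent_cluster x th'); auto. }
  destruct Hcase as [|[i [Hi [Fi [Ei Hnb]]]]]; [lra|].
  assert (HD2 := descent_step x x' th' Fr' i Hc HD' (Rnot_le_lt _ _ Hhigh) Hi Fi Ei Hnb Ht).
  destruct (Rle_dec (th' - v0 / 4) r1) as [Hlow|Hhigh'].
  - left. left. exists (fun j => negb (Fr' j)), r1. apply (descent_cluster x' (th' - v0 / 4)); auto.
  - right. exists (th' - v0 / 4), Fr'. split; [auto|]. lra.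
Qed.

(* The level of the free agents drops by [v0 / 4] per step as long as no cluster forms,
   which cannot last [K1] steps. *)
Lemma descent_phase (K1 : nat) (X : nat -> state) :
  (forall t, in_cube n (X t)) ->
  (forall t, (t < K1)%nat -> transition (X t) (X (S t)) (steer 0 (X t))) ->
  1 < INR K1 * (v0 / 4) -> clustered (X K1).
Proof.
  intros Hc HX HK.
  assert (Hinv : forall t, (t <= K1)%nat -> clustered (X t) \/
    exists th Fr, descent_state (X t) th Fr /\ r1 < th /\ th <= 1 - INR t * (v0 / 4)).
  { induction t as [|t IH]; intros Ht.
    - right. exists 1, (fun _ => false). split; [|simpl; lra].
      constructor; [intros j Hj _; apply Hc, Hj|discriminate|discriminate].
    - destruct (IH ltac:(lia)) as [HC|[th [Fr [HD [_ Hth]]]]].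
      + left. apply (clustered_step (X t) (X (S t)) 0 (Hc t) HC (HX t ltac:(lia))).
      + destruct (descent_progress (X t) (X (S t)) th Fr (Hc t) (Hc (S t)) HD (HX t ltac:(lia)))
          as [HC|[th' [Fr' [HD' [Hth1 Hth2]]]]]; [left; auto|right].
        exists th', Fr'. rewrite S_INR. split; [auto|]. split; lra. }
  destruct (Hinv K1 (le_n K1)) as [HC|[th [Fr [_ [Hth1 Hth2]]]]]; [auto|].
  exfalso. assert (0 < r1) by apply r1_pos. lra.
Qed.

(** * Phase 2: ascent *)

Lemma isolated_cluster_rise (x x' : state) (G : nat -> bool) (s l : R) :
  in_cube n x -> isolated_cluster x G s -> transition x x' (steer 1 x) ->
  (exists k, (k < n)%nat /\ G k = false) -> (forall i, (i < n)%nat -> G i = true -> l <= x i) ->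
  forall i, (i < n)%nat -> G i = true -> l + v0 / 4 <= x' i.
Proof.
  intros Hc HC Ht [k [Hk Gk]] Hl i Hi Gi.
  assert (Hmu : l <= nbr_mean x i <= 1 - r1).
  { apply (isolated_cluster_mean_bounds x G s i); auto.
    intros j Hj Gj. split; [apply Hl; auto|].
    assert (A := ic_below HC j k Hj Hk Gj Gk). assert (x k <= 1) by apply Hc, Hk. lra. }
  assert (Hsteer : steer 1 x i = v0).
  { unfold steer, clamp, Rmax, Rmin. repeat destruct Rle_dec; lra. }
  destruct (Ht i Hi) as [beta [Hb ->]]. rewrite Hsteer.
  assert (Hk0 := isolated_cluster_gain x G s i HC Hi Gi).
  assert (Hk1 := nbr_gain_bounds n r1 x i). apply noise_le in Hb.
  eapply Rle_trans; [|apply proj01_ge]; nra.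
Qed.

(* Phase 2 potential: the lowest cluster rises by [v0 / 4] per step unless it absorbs
   the next agent, which costs it less than [2 v0]. *)
Definition ascent_state (t : nat) (x : state) (G : nat -> bool) : Prop :=
  ((exists s, isolated_cluster x G s) \/ (exists F, touching_cluster x G F)) /\
  (outsiders G = 0%nat \/ forall i, (i < n)%nat -> G i = true ->
     INR t * (v0 / 4) + 2 * v0 * INR (outsiders G) - 2 * v0 * INR n <= x i).

Lemma ascent_start (x : state) : in_cube n x -> clustered x -> exists G, ascent_state 0 x G.
Proof.
  intros Hc HC. assert (Hpot : forall G, forall i, (i < n)%nat -> G i = true ->
    INR 0 * (v0 / 4) + 2 * v0 * INR (outsiders G) - 2 * v0 * INR n <= x i).
  { intros G i Hi _. assert (HL := le_INR _ _ (outsiders_le G)).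
    assert (0 <= x i) by apply Hc, Hi. simpl. nra. }
  destruct HC as [[G [s HC]]|[G [F HK]]]; exists G; split; eauto.
Qed.

Lemma ascent_step (t : nat) (x x' : state) (G : nat -> bool) :
  in_cube n x -> ascent_state t x G -> transition x x' (steer 1 x) ->
  exists G', ascent_state (S t) x' G'.
Proof.
  intros Hc [[[s HC]|[F HK]] Hpot] Ht.
  - exists G. split.
    + destruct (ic_pair HC) as [i0 [_ [Hi0 [_ [_ [Gi0 _]]]]]].
      destruct (isolated_cluster_step x x' _ G s (steer 1 x i0) Hc HC Ht) as [H|[F H]]; eauto.
      * intros i Hi Gi. unfold steer.
        rewrite (proj1 (isolated_cluster_common x G s i i0 HC Hi Hi0 Gi Gi0)). reflexivity.
      * apply steer_abs.
    + destruct Hpot as [H|H]; [left; auto|].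
      destruct (Nat.eq_dec (outsiders G) 0) as [H0|Hne]; [left; auto|right].
      intros i Hi Gi. rewrite S_INR.
      assert (A := isolated_cluster_rise x x' G s _ Hc HC Ht (outsiders_pos G Hne) H i Hi Gi).
      lra.
  - destruct (touching_cluster_step x x' _ G F Hc HK Ht) as [HC' Hlow];
      [intros i _; apply steer_abs|].
    exists (add_member G F). split; [left; eauto|].
    rewrite (outsiders_add_member G F (tc_F_lt HK) (tc_F_out HK)) in Hpot.
    destruct Hpot as [Hp|Hp]; [discriminate|right].
    intros a Ha Ga. assert (A := Hlow _ Hp a Ha Ga). rewrite S_INR in A |- *. lra.
Qed.

(* Once the potential exceeds [1], no agent can be left outside the cluster. *)
Lemma ascent_phase (K1 K2 : nat) (X : nat -> state) :
  (forall t, in_cube n (X t)) -> clustered (X K1) ->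
  (forall t, (K1 <= t < K1 + K2)%nat -> transition (X t) (X (S t)) (steer 1 (X t))) ->
  1 + 2 * v0 * INR n < INR K2 * (v0 / 4) ->
  exists s, isolated_cluster (X (K1 + K2)%nat) (fun _ => true) s.
Proof.
  intros Hc H0 HX HK.
  assert (Hinv : forall t, (t <= K2)%nat -> exists G, ascent_state t (X (K1 + t)%nat) G).
  { induction t as [|t IH]; intros Ht.
    - rewrite Nat.add_0_r. apply ascent_start; auto.
    - destruct (IH ltac:(lia)) as [G HA]. replace (K1 + S t)%nat with (S (K1 + t)) by lia.
      apply (ascent_step t _ _ G (Hc _) HA), HX. lia. }
  destruct (Hinv K2 (le_n K2)) as [G [Hst Hpot]].
  assert (Hpair : exists i, (i < n)%nat /\ G i = true).
  { destruct Hst as [[s HC]|[F HK']];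
      [destruct (ic_pair HC) as [i [_ [Hi [_ [_ [Gi _]]]]]]|
       destruct (tc_pair HK') as [i [_ [Hi [_ [_ [Gi _]]]]]]]; eauto. }
  assert (Hz : outsiders G = 0%nat).
  { destruct Hpot as [H|H]; auto. exfalso. destruct Hpair as [i [Hi Gi]].
    specialize (H i Hi Gi). assert (HL := le_INR _ _ (outsiders_le G)).
    assert (0 <= INR (outsiders G)) by apply pos_INR.
    assert (X (K1 + K2)%nat i <= 1) by apply Hc, Hi. nra. }
  destruct Hst as [[s HC]|[F HK']].
  - exists s. apply (isolated_cluster_ext _ G); auto. intros j Hj. apply (outsiders_zero G Hz j Hj).
  - exfalso. assert (GF := tc_F_out HK'). rewrite (outsiders_zero G Hz F (tc_F_lt HK')) in GF.
    discriminate.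
Qed.

(** * Phases 3 and 4: centering and separating *)

Lemma centering_step (x x' : state) (s D : R) :
  in_cube n x -> isolated_cluster x (fun _ => true) s -> transition x x' (steer (/ 2) x) ->
  0 <= D -> (forall i, (i < n)%nat -> Rabs (x i - / 2) <= D) ->
  isolated_cluster x' (fun _ => true) (2 * d) /\
  forall i, (i < n)%nat -> Rabs (x' i - / 2) <= Rmax (D / 2) (D - v0 / 2) + d.
Proof.
  intros Hc HC Ht HD HxD.
  destruct (ic_pair HC) as [i0 [_ [Hi0 [_ [_ [Gi0 _]]]]]].
  split.
  - destruct (isolated_cluster_step x x' _ (fun _ => true) s (steer (/ 2) x i0) Hc HC Ht)
      as [H|[F HF]].
    + intros i Hi _. unfold steer.
      rewrite (proj1 (isolated_cluster_common x _ s i i0 HC Hi Hi0 eq_refl eq_refl)).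
      reflexivity.
    + apply steer_abs.
    + exact H.
    + exfalso. assert (GF := tc_F_out HF). discriminate.
  - intros i Hi.
    assert (Hmu : / 2 - D <= nbr_mean x i <= / 2 + D).
    { apply (isolated_cluster_mean_bounds x (fun _ => true) s i); auto.
      intros j Hj _. assert (A := Rabs_le_inv _ _ (HxD j Hj)). lra. }
    assert (Hk := isolated_cluster_gain x (fun _ => true) s i HC Hi eq_refl).
    assert (Hk1 := nbr_gain_bounds n r1 x i).
    destruct (Ht i Hi) as [beta [Hb ->]]. apply noise_le in Hb.
    replace (/ 2) with (proj01 (/ 2)) at 2 by (apply proj01_id; lra).
    eapply Rle_trans; [apply proj01_lipschitz|].
    apply Rabs_le. unfold steer, clamp, Rmax, Rmin. repeat destruct Rle_dec; nra.
Qed.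

Lemma centering_phase (K0 K3 : nat) (X : nat -> state) (s0 : R) :
  (forall t, in_cube n (X t)) -> isolated_cluster (X K0) (fun _ => true) s0 ->
  (forall t, (K0 <= t < K0 + K3)%nat -> transition (X t) (X (S t)) (steer (/ 2) (X t))) ->
  / 2 < INR K3 * d ->
  exists s, isolated_cluster (X (K0 + K3)%nat) (fun _ => true) s /\
    forall i, (i < n)%nat -> Rabs (X (K0 + K3)%nat i - / 2) <= 4 * d.
Proof.
  intros Hc H0 HX HK.
  assert (Hinv : forall t, (t <= K3)%nat -> exists s,
    isolated_cluster (X (K0 + t)%nat) (fun _ => true) s /\
    forall i, (i < n)%nat -> Rabs (X (K0 + t)%nat i - / 2) <= Rmax (4 * d) (/ 2 - INR t * d)).
  { induction t as [|t IH]; intros Ht.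
    - rewrite Nat.add_0_r. exists s0. split; [auto|]. intros i Hi.
      assert (A := Hc K0 i Hi). eapply Rle_trans; [|apply Rmax_r].
      simpl. apply Rabs_le. lra.
    - destruct (IH ltac:(lia)) as [s [HC HD]].
      replace (K0 + S t)%nat with (S (K0 + t)) by lia.
      set (D := Rmax (4 * d) (/ 2 - INR t * d)) in *.
      assert (HD0 : 4 * d <= D) by apply Rmax_l.
      destruct (centering_step _ _ s D (Hc _) HC (HX (K0 + t)%nat ltac:(lia)) ltac:(lra) HD)
        as [HC' HD'].
      exists (2 * d). split; [auto|]. intros i Hi. eapply Rle_trans; [apply HD'; auto|].
      rewrite S_INR. unfold D, Rmax. repeat destruct Rle_dec; lra. }
  destruct (Hinv K3 (le_n K3)) as [s [HC HD]]. exists s. split; [auto|].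
  intros i Hi. eapply Rle_trans; [apply HD; auto|]. unfold Rmax. destruct Rle_dec; lra.
Qed.

Lemma full_cluster_gain (x : state) (s : R) (i : nat) :
  isolated_cluster x (fun _ => true) s -> (i < n)%nat -> nbr_gain x i = (INR n - 1) / INR n.
Proof.
  intros HC Hi. apply (nbr_gain_full n r1 r1_nonneg); [auto|]. intros j Hj.
  apply Rle_trans with s; [apply (ic_diam HC); auto|apply (ic_width HC)].
Qed.

Lemma c_eta_le_r1 (eta : R) : eta <= INR n * r1 / (2 * (INR n - 1)) -> c_eta n eta <= r1.
Proof.
  intros Heta. assert (HN := INR_n_ge3). unfold c_eta.
  apply Rdiv_le_of; [lra|]. apply Rmult_le_compat_l with (r := 2 * (INR n - 1)) in Heta; [|lra].
  replace (2 * (INR n - 1) * (INR n * r1 / (2 * (INR n - 1)))) with (r1 * INR n) in Heta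
    by (field; lra). lra.
Qed.

Definition separating_input (eta : R) (i : nat) : R :=
  if Nat.eqb i 0 then eta - d else if Nat.eqb i 1 then - (eta - d) else 0.

(* All agents see everybody, hence share the mean and the gain [(n - 1) / n]. *)
Lemma separating_step (eta eps : R) (x x' : state) (s : R) :
  2 * d <= eta -> 4 * d <= eps -> 8 * d <= 1 - r1 -> eta <= INR n * r1 / (2 * (INR n - 1)) ->
  in_cube n x -> isolated_cluster x (fun _ => true) s ->
  (forall i, (i < n)%nat -> Rabs (x i - / 2) <= 4 * d) ->
  transition x x' (separating_input eta) -> E' n eta eps x'.
Proof.
  intros Hde Hdeps Hdr Heta Hc HC HxD Ht.
  set (k0 := nbr_gain x 0). set (mu := nbr_mean x 0).
  assert (Hc2 : c_eta n eta = 2 * (k0 * eta)).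
  { unfold k0. rewrite (full_cluster_gain x s 0 HC ltac:(lia)).
    unfold c_eta. assert (HN := INR_n_ge3). field. lra. }
  assert (Hke : k0 * eta <= r1 / 2) by (assert (A := c_eta_le_r1 eta Heta); lra).
  assert (Hk0 : / 2 <= k0 < 1).
  { split; [apply (isolated_cluster_gain x (fun _ => true) s); auto; lia|apply nbr_gain_bounds]. }
  assert (Hmu : / 2 - 4 * d <= mu <= / 2 + 4 * d).
  { apply (isolated_cluster_mean_bounds x (fun _ => true) s 0); auto; [lia|].
    intros i Hi _. assert (A := Rabs_le_inv _ _ (HxD i Hi)). lra. }
  assert (Hval : forall i, (i < n)%nat -> exists beta, Rabs beta <= k0 * d /\
             x' i = mu + k0 * separating_input eta i + beta /\
             Rabs (k0 * separating_input eta i + beta) <= k0 * eta).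
  { intros i Hi.
    destruct (isolated_cluster_update x x' _ _ s 0 i HC Ht ltac:(lia) eq_refl Hi eq_refl)
      as [beta [Hb E]]. fold k0 mu in Hb, E. exists beta.
    assert (Hwb : Rabs (k0 * separating_input eta i + beta) <= k0 * eta).
    { apply Rabs_le_inv in Hb. apply Rabs_le. unfold separating_input.
      destruct (Nat.eqb i 0); [|destruct (Nat.eqb i 1)]; nra. }
    split; [auto|]. split; [|auto].
    rewrite E. apply proj01_id. apply Rabs_le_inv in Hwb. lra. }
  split.
  { intros i Hi. destruct (Hval i Hi) as [beta [_ [-> Hb]]]. apply Rabs_le_inv in Hb. lra. }
  rewrite Hc2. split.
  - eapply Rle_trans; [|apply (spread_ge n x' 0 1); lia].
    destruct (Hval 0%nat ltac:(lia)) as [b0 [Hb0 [-> _]]].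
    destruct (Hval 1%nat ltac:(lia)) as [b1 [Hb1 [-> _]]].
    unfold separating_input. simpl.
    apply Rabs_le_inv in Hb0. apply Rabs_le_inv in Hb1.
    eapply Rle_trans; [|apply Rle_abs]. nra.
  - apply spread_le; [nra|]. intros i j Hi Hj.
    destruct (Hval i Hi) as [bi [_ [-> Hbi]]]. destruct (Hval j Hj) as [bj [_ [-> Hbj]]].
    apply Rabs_le_inv in Hbi. apply Rabs_le_inv in Hbj. apply Rabs_le. lra.
Qed.

Definition schedule (K1 K2 K3 : nat) (eta : R) (t : nat) (x : state) : nat -> R :=
  if (t <? K1)%nat then steer 0 x
  else if (t <? K1 + K2)%nat then steer 1 x
  else if (t <? K1 + K2 + K3)%nat then steer (/ 2) x
  else separating_input eta.

Lemma schedule_abs (K1 K2 K3 : nat) (eta : R) (t : nat) (x : state) (i : nat) :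
  2 * v0 <= eta -> Rabs (schedule K1 K2 K3 eta t x i) <= eta - d.
Proof.
  intros Heta. unfold schedule.
  destruct (t <? K1)%nat; [|destruct (t <? K1 + K2)%nat; [|destruct (t <? K1 + K2 + K3)%nat]];
    try (eapply Rle_trans; [apply steer_abs|lra]).
  unfold separating_input. destruct (Nat.eqb i 0); [|destruct (Nat.eqb i 1)];
    rewrite ?Rabs_Ropp, ?Rabs_R0; [rewrite Rabs_right; lra|rewrite Rabs_right; lra|lra].
Qed.

Lemma schedule_reaches (K1 K2 K3 : nat) (eta eps : R) (X : nat -> state) :
  2 * v0 <= eta -> 4 * d <= eps -> 8 * d <= 1 - r1 -> eta <= INR n * r1 / (2 * (INR n - 1)) ->
  1 < INR K1 * (v0 / 4) -> 1 + 2 * v0 * INR n < INR K2 * (v0 / 4) -> / 2 < INR K3 * d ->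
  (forall t, in_cube n (X t)) ->
  (forall t, (t <= K1 + K2 + K3)%nat ->
     transition (X t) (X (S t)) (schedule K1 K2 K3 eta t (X t))) ->
  E' n eta eps (X (S (K1 + K2 + K3))).
Proof.
  intros Heta Heps Hdr Hetab HK1 HK2 HK3 Hc HX.
  assert (Hphase : forall t w, (t <= K1 + K2 + K3)%nat -> schedule K1 K2 K3 eta t (X t) = w ->
            transition (X t) (X (S t)) w) by (intros t w Ht <-; apply HX, Ht).
  assert (H1 := descent_phase K1 X Hc).
  destruct (ascent_phase K1 K2 X Hc) as [s2 HC2].
  { apply H1; [|exact HK1]. intros t Ht. apply Hphase; [lia|].
    unfold schedule. destruct (Nat.ltb_spec t K1); [reflexivity|lia]. }
  { intros t Ht. apply Hphase; [lia|]. unfold schedule.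
    destruct (Nat.ltb_spec t K1); [lia|]. destruct (Nat.ltb_spec t (K1 + K2)); [reflexivity|lia]. }
  { exact HK2. }
  destruct (centering_phase (K1 + K2) K3 X s2 Hc HC2) as [s3 [HC3 HD3]]; [|exact HK3|].
  { intros t Ht. apply Hphase; [lia|]. unfold schedule.
    destruct (Nat.ltb_spec t K1); [lia|]. destruct (Nat.ltb_spec t (K1 + K2)); [lia|].
    destruct (Nat.ltb_spec t (K1 + K2 + K3)); [reflexivity|lia]. }
  apply (separating_step eta eps (X (K1 + K2 + K3)%nat) _ s3); auto; [lra|].
  apply Hphase; [lia|]. unfold schedule.
  destruct (Nat.ltb_spec (K1 + K2 + K3) K1); [lia|].
  destruct (Nat.ltb_spec (K1 + K2 + K3) (K1 + K2)); [lia|].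
  destruct (Nat.ltb_spec (K1 + K2 + K3) (K1 + K2 + K3)); [lia|reflexivity].
Qed.

End Steering.

Lemma traj_succ (n : nat) (r : nat -> R) (x0 : state)
    (u : nat -> (nat -> state) -> nat -> nat -> R) (b : nat -> nat -> nat -> R) (t : nat) :
  traj n r x0 u b (S t) = step n r (traj n r x0 u b t) (u t (hist n r x0 u b t)) (b t).
Proof.
  unfold traj. cbn [hist]. rewrite (proj2 (Nat.leb_gt (S t) t) ltac:(lia)). reflexivity.
Qed.

Theorem lemma11 (n : nat) (r1 eta : R) :
  (3 <= n)%nat ->
  0 < eta ->
  1 / (INR n - 1) <= r1 < 1 ->
  eta <= INR n * r1 / (2 * (INR n - 1)) ->
  forall eps : R, 0 < eps ->
    robustly_reachable n (fun _ => r1) eta (E' n eta eps).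
Proof.
  intros Hn Heta [Hr Hr1] Hetab eps Heps.
  assert (Hr0 := r1_pos n r1 Hn Hr).
  set (v0 := Rmin (eta / 2) (r1 / 8)).
  assert (Hv : 0 < v0 /\ v0 <= eta / 2 /\ v0 <= r1 / 8)
    by (split; [apply Rmin_glb_lt|split; [apply Rmin_l|apply Rmin_r]]; lra).
  set (d := Rmin (v0 / 8) (Rmin (eps / 8) ((1 - r1) / 16))).
  assert (Hd : 0 < d /\ d <= v0 / 8 /\ d <= eps / 8 /\ d <= (1 - r1) / 16).
  { unfold d. repeat split; try (repeat apply Rmin_glb_lt; lra);
      [apply Rmin_l|eapply Rle_trans; [apply Rmin_r|apply Rmin_l]
                   |eapply Rle_trans; [apply Rmin_r|apply Rmin_r]]. }
  destruct (INR_archimed (v0 / 4) 1 ltac:(lra)) as [K1 HK1].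
  destruct (INR_archimed (v0 / 4) (1 + 2 * v0 * INR n) ltac:(lra)) as [K2 HK2].
  destruct (INR_archimed d (/ 2) ltac:(lra)) as [K3 HK3].
  exists (S (K1 + K2 + K3)). split; [lia|]. exists d. split; [lra|].
  intros x0 Hx0. right.
  set (u := fun t (h : nat -> state) (j i : nat) => schedule n r1 d v0 K1 K2 K3 eta t (h t) i).
  exists (fun _ _ _ => d), u. split.
  { intros t h i j _ _ _. split; [lra|].
    assert (A := Rabs_le_inv _ _ (schedule_abs n r1 d v0 ltac:(lra) ltac:(lra) ltac:(lra)
                                   K1 K2 K3 eta t (h t) i ltac:(lra))). unfold u. lra. }
  intros b Hb. exists (S (K1 + K2 + K3)). split; [lia|].
  apply (schedule_reaches n r1 d v0 Hn Hr Hr1); try lra.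
  - intros [|t]; [exact Hx0|]. rewrite traj_succ. intros i Hi. apply proj01_in.
  - intros t Ht. rewrite traj_succ. apply step_transition; [lra|].
    intros i j Hi Hj. split; [reflexivity|]. apply Rabs_le, Hb; lia.
Qed.
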